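(* Suppose $F_i$ satisfies the Production Function Assumption (b) and $W_i$ satisfies the Labor Cost and Growth Assumptions. Then: (i) For all $\mathbf P\in\mathbb R^N_{>0}$, $P_E>0$ and $x\in\mathcal O_i$, the problem $\overline\Pi_i(\mathbf P,P_E,x):=\max_{(\mathbf q_i,E_i,L_i)\in\mathbb R^{N+2}_{\ge0}}\Pi_i(\mathbf P,\mathbf q_i,E_i,L_i,P_E,x)$ admits a solution; if $F_i$ is strictly concave and $W_i$ strictly convex, it is unique. (ii) $\overline\Pi_i(\mathbf P,P_E,x)=W_i^*\big(\widetilde\Pi_i(\mathbf P,P_E)-x\big)$. (iii) If $W_i$ is strictly convex and differentiable, optimal inputs are $L_i^*=(W_i')^{-1}(\widetilde\Pi_i(\mathbf P,P_E)-x)$, $q^*_{ij}=\tilde q^*_{ij}L_i^*$ ($j=1,\dots,N$), $E_i^*=\tilde E_i^*L_i^*$, where $(\tilde{\mathbf q}_i^*,\tilde E_i^* )$ maximizes the problem defining $\widetilde\Pi_i(\mathbf P,P_E)$.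
   Context: $\mathcal O_i\subseteq\mathbb R_{>0}$ is the state space of sector $i$. Production function $F_i:\mathbb R^{N+2}_{\ge0}\to\mathbb R_{\ge0}$, labor cost $W_i:\mathbb R_{\ge0}\to\mathbb R_{>0}$. Instantaneous profit: $\Pi_i(\mathbf P,\mathbf q_i,E_i,L_i,P_E,x)=P_iF_i(\mathbf q_i,E_i,L_i)-\sum_{j=1}^NP_jq_{ij}-P_EE_i-W_i(L_i)-xL_i$. $W_i^*(y)=\max_{L\ge0}\{Ly-W_i(L)\}$. $\widetilde\Pi_i(\mathbf P,P_E)=\max_{\tilde{\mathbf q}_i\ge0,\tilde E_i\ge0}\{P_iF_i(\tilde{\mathbf q}_i,\tilde E_i,1)-\sum_jP_j\tilde q_{ij}-P_E\tilde E_i\}$. Production Function Assumption (b): $F_i$ increasing in each argument, upper semi-continuous, concave, homogeneous of degree one, and $F_i(\mathbf q,E,L)\le c_iL$ for some $c_i<\infty$. Labor Cost Assumption: $W_i$ strictly increasing, lower semi-continuous, convex. Growth Assumption: $\lim_{L\to\infty}W_i(L)/L=+\infty$. *)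

From HB Require Import structures.
From mathcomp Require Import all_boot all_order all_algebra.
From mathcomp Require Import all_classical all_reals all_analysis.
Set Implicit Arguments. Unset Strict Implicit. Unset Printing Implicit Defensive.
Import Order.TTheory GRing.Theory Num.Theory.
Import numFieldNormedType.Exports.
Local Open Scope classical_set_scope.
Local Open Scope ring_scope.

Section Defs.
Variables (R : realType) (N : nat).

(* A point of R^{N+2}_{>=0} is a triple (q, E, L) with q : 'I_N -> R. *)
Definition nonnegv (q : 'I_N -> R) : Prop := forall j, 0 <= q j.

Definition in_dom (q : 'I_N -> R) (E L : R) : Prop :=
  nonnegv q /\ 0 <= E /\ 0 <= L.

Definition vcomb (t : R) (q q' : 'I_N -> R) : 'I_N -> R :=
  fun j => t * q j + (1 - t) * q' j.

Definition prod_nonneg (F : ('I_N -> R) -> R -> R -> R) : Prop :=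
  forall q E L, in_dom q E L -> 0 <= F q E L.

Definition prod_increasing (F : ('I_N -> R) -> R -> R -> R) : Prop :=
  forall q E L q' E' L', in_dom q E L -> in_dom q' E' L' ->
    (forall j, q j <= q' j) -> E <= E' -> L <= L' -> F q E L <= F q' E' L'.

Definition prod_usc (F : ('I_N -> R) -> R -> R -> R) : Prop :=
  forall q E L, in_dom q E L -> forall eps : R, 0 < eps ->
    exists delta : R, 0 < delta /\
      forall q' E' L', in_dom q' E' L' ->
        (forall j, `|q' j - q j| < delta) -> `|E' - E| < delta -> `|L' - L| < delta ->
        F q' E' L' < F q E L + eps.

Definition prod_concave (F : ('I_N -> R) -> R -> R -> R) : Prop :=
  forall q E L q' E' L' (t : R), in_dom q E L -> in_dom q' E' L' -> 0 <= t <= 1 ->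
    t * F q E L + (1 - t) * F q' E' L'
      <= F (vcomb t q q') (t * E + (1 - t) * E') (t * L + (1 - t) * L').

Definition prod_strictly_concave (F : ('I_N -> R) -> R -> R -> R) : Prop :=
  forall q E L q' E' L' (t : R), in_dom q E L -> in_dom q' E' L' -> 0 < t < 1 ->
    (q <> q' \/ E <> E' \/ L <> L') ->
    t * F q E L + (1 - t) * F q' E' L'
      < F (vcomb t q q') (t * E + (1 - t) * E') (t * L + (1 - t) * L').

Definition prod_homogeneous1 (F : ('I_N -> R) -> R -> R -> R) : Prop :=
  forall q E L (t : R), in_dom q E L -> 0 < t ->
    F (fun j => t * q j) (t * E) (t * L) = t * F q E L.

Definition prod_linear_bound (F : ('I_N -> R) -> R -> R -> R) : Prop :=
  exists c : R, forall q E L, in_dom q E L -> F q E L <= c * L.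

Definition production_assumption_b (F : ('I_N -> R) -> R -> R -> R) : Prop :=
  prod_nonneg F /\ prod_increasing F /\ prod_usc F /\ prod_concave F /\
  prod_homogeneous1 F /\ prod_linear_bound F.

Definition labor_cost_assumption (W : R -> R) : Prop :=
  [/\ (forall L, 0 <= L -> 0 < W L),
      (forall a b, 0 <= a -> a < b -> W a < W b),
      (forall L, 0 <= L -> forall eps : R, 0 < eps -> exists delta : R, 0 < delta /\
          forall L', 0 <= L' -> `|L' - L| < delta -> W L - eps < W L')
    &
      (forall a b (t : R), 0 <= a -> 0 <= b -> 0 <= t <= 1 ->
          W (t * a + (1 - t) * b) <= t * W a + (1 - t) * W b)].

Definition strictly_convex_nonneg (W : R -> R) : Prop :=
  forall a b (t : R), 0 <= a -> 0 <= b -> a <> b -> 0 < t < 1 ->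
    W (t * a + (1 - t) * b) < t * W a + (1 - t) * W b.

Definition growth_assumption (W : R -> R) : Prop :=
  (fun L : R => W L / L) @ +oo --> +oo.

(* differentiability of W on [0, +oo): two-sided derivative at L > 0,
   right derivative at 0; W' denotes the (right) derivative. *)
Definition rderive (W : R -> R) (L : R) : R :=
  lim ((fun h : R => h^-1 * (W (L + h) - W L)) @ 0^'+).

Definition differentiable_nonneg (W : R -> R) : Prop :=
  (forall L, 0 < L -> derivable W L 1) /\
  cvg ((fun h : R => h^-1 * (W (0 + h) - W 0)) @ 0^'+).

Definition Profit (F : ('I_N -> R) -> R -> R -> R) (W : R -> R) (i : 'I_N)
  (P : 'I_N -> R) (q : 'I_N -> R) (E L PE x : R) : R :=
  P i * F q E L - \sum_(j < N) P j * q j - PE * E - W L - x * L.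

Definition Wstar (W : R -> R) (y : R) : R :=
  sup [set z | exists L, 0 <= L /\ z = L * y - W L].

Definition tilde_obj (F : ('I_N -> R) -> R -> R -> R) (i : 'I_N)
  (P : 'I_N -> R) (PE : R) (q : 'I_N -> R) (E : R) : R :=
  P i * F q E 1 - \sum_(j < N) P j * q j - PE * E.

Definition Pitilde (F : ('I_N -> R) -> R -> R -> R) (i : 'I_N)
  (P : 'I_N -> R) (PE : R) : R :=
  sup [set z | exists q E, nonnegv q /\ 0 <= E /\ z = tilde_obj F i P PE q E].

Definition is_argmax_tilde (F : ('I_N -> R) -> R -> R -> R) (i : 'I_N)
  (P : 'I_N -> R) (PE : R) (q : 'I_N -> R) (E : R) : Prop :=
  nonnegv q /\ 0 <= E /\
  forall q' E', nonnegv q' -> 0 <= E' -> tilde_obj F i P PE q' E' <= tilde_obj F i P PE q E.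

Definition Pibar (F : ('I_N -> R) -> R -> R -> R) (W : R -> R) (i : 'I_N)
  (P : 'I_N -> R) (PE x : R) : R :=
  sup [set z | exists q E L, in_dom q E L /\ z = Profit F W i P q E L PE x].

Definition is_argmax_Pi (F : ('I_N -> R) -> R -> R -> R) (W : R -> R) (i : 'I_N)
  (P : 'I_N -> R) (PE x : R) (q : 'I_N -> R) (E L : R) : Prop :=
  in_dom q E L /\
  forall q' E' L', in_dom q' E' L' -> Profit F W i P q' E' L' PE x <= Profit F W i P q E L PE x.

End Defs.

From HB Require Import structures.
From mathcomp Require Import all_boot all_order all_algebra.
From mathcomp Require Import all_classical all_reals all_analysis.
From mathcomp Require Import lra ring.
Set Implicit Arguments. Unset Strict Implicit. Unset Printing Implicit Defensive.
Import Order.TTheory GRing.Theory Num.Theory.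
Import numFieldNormedType.Exports.
Local Open Scope classical_set_scope.
Local Open Scope ring_scope.

(* By homogeneity of degree one, a plan (q, E, L) with L > 0 is L times the
   plan (q/L, E/L, 1), so its profit is
   L (tilde_obj (q/L, E/L) - x) - W L <= L (Pitilde - x) - W L,
   with equality along the ray through a maximiser of Pitilde.  Hence
   Pibar = max_L (L (Pitilde - x) - W L) = W* (Pitilde - x), attained on that
   ray.  Both maximisers exist because an upper semicontinuous function attains
   its maximum on a compact set: the objective of Pitilde is negative outside a
   box since F <= c L, and L y - W L drops below - W 0 for large L by the growth
   assumption.  For (iii), convexity makes W'(L) = y sufficient for L to
   maximise L y - W L.  The uniqueness clause of (i) is vacuous: F is linear
   along rays, so it cannot be strictly concave. *)

Lemma usc_compact_max (R : realType) (T : topologicalType) (K : set T) (f : T -> R) :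
  compact K -> K !=set0 ->
  (forall z, K z -> forall e : R, 0 < e -> \forall y \near z, K y -> f y < f z + e) ->
  exists2 z, K z & forall y, K y -> f y <= f z.
Proof.
move=> cK [a Ka] f_usc; apply: contrapT => nomax.
have improve z : K z -> exists2 w, K w & f z < f w.
  move=> Kz; apply: contrapT => zmax; apply: nomax; exists z => // y Ky.
  by rewrite leNgt; apply/negP => fzy; apply: zmax; exists y.
(* A cluster point [z] of the superlevel sets of [f] is beaten by some [w];
   upper semicontinuity at [z] contradicts [z] adhering to [f > f w]. *)
pose G := filter_from K (fun a => [set y | K y /\ f a < f y]).
have G_proper : ProperFilter G.
  apply: filter_from_proper; last by move=> u Ku; have [w Kw fuw] := improve u Ku; exists w.
  apply: filter_from_filter; first by exists a.
  move=> u v Ku Kv; have [fuv|fvu] := leP (f u) (f v).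
    by exists v => // y [Ky fvy]; split; split => //; exact: le_lt_trans fvy.
  by exists u => // y [Ky fuy]; split; split => //; exact: lt_trans fuy.
have GK : G K by exists a => // y [].
have [z [Kz clz]] := cK G G_proper GK.
have [w Kw fzw] := improve z Kz.
have Gw : G [set y | K y /\ f w < f y] by exists w.
have [y [[Ky fwy] near_y]] := clz _ _ Gw (f_usc z Kz (f w - f z) (ltac:(by rewrite subr_gt0))).
by move: (near_y Ky); rewrite addrC subrK => /lt_trans/(_ fwy); rewrite ltxx.
Qed.

(* The binder is typed: [\forall y \near z] would type [y] at the plain arrow
   type, where [nbhs z] is not the product-topology filter. *)
Lemma near_ptws_dist_lt (R : realType) (I : finType) (z : {ptws I -> R}) (d : R) :
  0 < d -> {near z, forall y : {ptws I -> R}, forall k, `|z k - y k| < d}.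
Proof.
move=> d0; apply: (@filter_forall {ptws I -> R} _ (fun k y => `|z k - y k| < d) (nbhs z) _) => k.
exact: (@proj_continuous _ (fun _ => R) k z _
  (@cvgr_dist_lt _ _ _ (nbhs (z k)) _ id (z k) cvg_id _ d0)).
Qed.

Lemma sup_maximum (R : realType) (S : set R) (m : R) :
  S m -> (forall z, S z -> z <= m) -> sup S = m.
Proof.
move=> Sm ub; apply/le_anti/andP; split; first by apply: ge_sup; [exists m | exact: ub].
by apply: sup_upper_bound => //; split; [exists m | exists m => z Sz; exact: ub].
Qed.

Section ReducedProblem.
Variables (R : realType) (N : nat) (i : 'I_N) (F : ('I_N -> R) -> R -> R -> R).
Variables (P : 'I_N -> R) (PE c : R).
Hypotheses (P_gt0 : forall j, 0 < P j) (PE_gt0 : 0 < PE).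
Hypotheses (F_ge0 : prod_nonneg F) (F_usc : prod_usc F).
Hypothesis F_le : forall q E L, in_dom q E L -> F q E L <= c * L.

(* A pair [(q, E)] is encoded as one function on [option 'I_N] ([Some j] for
   [q j], [None] for [E]) so that Tychonoff's theorem applies to boxes. *)
Definition tilde_obj_opt (f : option 'I_N -> R) : R :=
  tilde_obj F i P PE (fun j => f (Some j)) (f None).

Definition input_cost (f : option 'I_N -> R) : R :=
  \sum_j P j * f (Some j) + PE * f None.

Definition opt_price (k : option 'I_N) : R := if k is Some j then P j else PE.

Lemma tilde_obj_optE f :
  tilde_obj_opt f = P i * F (fun j => f (Some j)) (f None) 1 - input_cost f.
Proof. by rewrite /tilde_obj_opt /tilde_obj /input_cost opprD addrA. Qed.

Lemma opt_price_gt0 k : 0 < opt_price k.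
Proof. by case: k. Qed.

Lemma in_dom_opt (f : option 'I_N -> R) :
  (forall k, 0 <= f k) -> in_dom (fun j => f (Some j)) (f None) 1.
Proof. by move=> f_ge0; split; [move=> j|split]; rewrite ?ler01. Qed.

Lemma input_cost_diff_le (y z : option 'I_N -> R) (d : R) :
  (forall k, z k - y k <= d) -> input_cost z - input_cost y <= d * (\sum_j P j + PE).
Proof.
move=> zy_le; have hP j : P j * z (Some j) - P j * y (Some j) <= d * P j.
  by rewrite -mulrBr mulrC ler_wpM2r ?(ltW (P_gt0 j)).
have hPE : PE * z None - PE * y None <= d * PE by rewrite -mulrBr mulrC ler_wpM2r ?(ltW PE_gt0).
have hsum : \sum_j P j * z (Some j) - \sum_j P j * y (Some j) <= d * \sum_j P j.
  by rewrite -sumrB mulr_sumr; apply: ler_sum => j _; exact: hP.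
by rewrite /input_cost mulrDr; lra.
Qed.

Lemma tilde_obj_ge0_box (f : option 'I_N -> R) : (forall k, 0 <= f k) ->
  0 <= tilde_obj_opt f -> forall k, f k <= P i * c / opt_price k.
Proof.
move=> f_ge0 obj_ge0 k.
have FPc : P i * F (fun j => f (Some j)) (f None) 1 <= P i * c.
  by rewrite ler_pM2l // -[c]mulr1; apply: F_le; exact: in_dom_opt.
have term_ge0 j : 0 <= P j * f (Some j) by rewrite mulr_ge0 // ltW.
have cost_le : input_cost f <= P i * c by move: obj_ge0; rewrite tilde_obj_optE; lra.
rewrite ler_pdivlMr ?opt_price_gt0 // mulrC; apply: le_trans cost_le; case: k => [j|] /=.
  rewrite /input_cost (bigD1 j) //= -addrA lerDl addr_ge0 ?sumr_ge0 //.
  by rewrite mulr_ge0 // ltW.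
by rewrite /input_cost lerDr sumr_ge0.
Qed.

Lemma tilde_obj_opt_usc (z : {ptws option 'I_N -> R}) : (forall k, 0 <= z k) ->
  forall e : R, 0 < e -> {near z, forall y : {ptws option 'I_N -> R},
    (forall k, 0 <= y k) -> tilde_obj_opt y < tilde_obj_opt z + e}.
Proof.
move=> z_ge0 e e_gt0.
have [d1 [d1_gt0 Fz_usc]] :=
  F_usc (in_dom_opt z_ge0) (ltac:(by rewrite !divr_gt0) : 0 < e / 2 / P i).
pose SP := \sum_j P j + PE.
have SP_ge0 : 0 <= SP by rewrite addr_ge0 ?sumr_ge0 // => *; exact: ltW.
pose d2 := e / 2 / (SP + 1).
have d2_gt0 : 0 < d2 by rewrite !divr_gt0 //; lra.
have d2SP : d2 * SP < e / 2.
  by rewrite /d2 mulrAC ltr_pdivrMr ?ltr_pM2l ?divr_gt0 //; lra.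
near=> y => y_ge0.
have yz : forall k, `|z k - y k| < Num.min d1 d2.
  by near: y; apply: near_ptws_dist_lt; rewrite lt_min d1_gt0 d2_gt0.
have yz1 k : `|y k - z k| < d1 by rewrite distrC; apply: lt_le_trans (yz k) _; rewrite ge_min lexx.
have yz2 k : z k - y k <= d2.
  by apply: le_trans (ler_norm _) (ltW (lt_le_trans (yz k) _)); rewrite ge_min lexx orbT.
have Fyz := Fz_usc _ _ _ (in_dom_opt y_ge0) (fun j => yz1 (Some j)) (yz1 None)
  (ltac:(by rewrite subrr normr0)).
have PFyz : P i * F (fun j => y (Some j)) (y None) 1
    < P i * F (fun j => z (Some j)) (z None) 1 + e / 2.
  rewrite -[e / 2](@divfK _ (P i)) ?gt_eqF // [_ / P i * _]mulrC -mulrDr.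
  by rewrite ltr_pM2l.
have := input_cost_diff_le yz2; rewrite !tilde_obj_optE -/SP; lra.
Unshelve. all: by end_near.
Qed.

Lemma exists_argmax_tilde : exists qt Et, is_argmax_tilde F i P PE qt Et.
Proof.
pose K := [set f : {ptws option 'I_N -> R} | forall k, `[0, P i * c / opt_price k]%classic (f k)].
have K_ge0 f : K f -> forall k, 0 <= f k by move=> Kf k; move: (Kf k); rewrite /= in_itv /= => /andP[].
have obj0_ge0 : 0 <= tilde_obj_opt (fun _ => 0).
  rewrite tilde_obj_optE /input_cost big1 => [|j _]; last by rewrite mulr0.
  rewrite mulr0 !addr0 subr0; apply: mulr_ge0; first exact: ltW.
  exact: F_ge0 (in_dom_opt (fun=> lexx 0)).
have K0 : K (fun _ => 0).
  move=> k; rewrite /= in_itv /= lexx.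
  exact: (tilde_obj_ge0_box (f := fun _ => 0) (fun=> lexx 0) obj0_ge0 k).
have K_usc z : K z -> forall e : R, 0 < e ->
    \forall y \near z, K y -> tilde_obj_opt y < tilde_obj_opt z + e.
  move=> Kz e e_gt0; apply: filterS (tilde_obj_opt_usc (K_ge0 z Kz) e_gt0).
  by move=> y y_usc Ky; exact: y_usc (K_ge0 y Ky).
have [z Kz zmax] := usc_compact_max (tychonoff (fun k => @segment_compact R 0 _))
  (ex_intro _ _ K0) K_usc.
exists (fun j => z (Some j)), (z None); split; first by move=> j; exact: K_ge0.
split => [|q E q_ge0 E_ge0]; first exact: K_ge0.
pose f : {ptws option 'I_N -> R} := fun k => if k is Some j then q j else E.
have f_ge0 k : 0 <= f k by case: k.
change (tilde_obj_opt f <= tilde_obj_opt z).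
have [obj_lt0|obj_ge0] := ltP (tilde_obj_opt f) 0.
  by apply: le_trans (ltW obj_lt0) (le_trans obj0_ge0 (zmax _ K0)).
apply: zmax => k; rewrite /= in_itv /= f_ge0 /=.
exact: tilde_obj_ge0_box.
Qed.

End ReducedProblem.

Definition is_argmax_labor (R : realType) (W : R -> R) (y L : R) : Prop :=
  0 <= L /\ forall L', 0 <= L' -> L' * y - W L' <= L * y - W L.

Section LaborProblem.
Variables (R : realType) (W : R -> R).
Hypothesis W_lsc : forall L, 0 <= L -> forall eps : R, 0 < eps ->
  exists delta : R, 0 < delta /\
    forall L', 0 <= L' -> `|L' - L| < delta -> W L - eps < W L'.
Hypothesis W_convex : forall a b (t : R), 0 <= a -> 0 <= b -> 0 <= t <= 1 ->
  W (t * a + (1 - t) * b) <= t * W a + (1 - t) * W b.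

Lemma labor_obj_lt_eventually (y : R) : growth_assumption W ->
  exists2 M : R, 1 <= M & forall L, M < L -> L * y - W L < - W 0.
Proof.
move=> /cvgryPge/(_ (`|y| + `|W 0| + 1))[M0 [_ W_ge]].
exists (Num.max M0 1) => [|L]; first by rewrite le_max lexx orbT.
rewrite gt_max => /andP[M0L L_gt1].
have L_gt0 : 0 < L by apply: lt_trans L_gt1.
have := W_ge L M0L; rewrite ler_pdivlMr // => WL_ge.
have Ly : L * y <= L * `|y| by rewrite ler_pM2l // ler_norm.
have LW0 : `|W 0| <= L * `|W 0| by rewrite ler_peMl // ltW.
have := ler_norm (W 0); nra.
Qed.

Lemma labor_obj_usc (y z : R) : 0 <= z -> forall e : R, 0 < e ->
  \forall L \near z, 0 <= L -> L * y - W L < z * y - W z + e.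
Proof.
move=> z_ge0 e e_gt0.
have [d1 [d1_gt0 Wz_lsc]] := W_lsc z_ge0 (ltac:(by rewrite divr_gt0) : 0 < e / 2).
have y1_gt0 : 0 < `|y| + 1 by have := normr_ge0 y; lra.
pose d2 := e / 2 / (`|y| + 1).
have d2_gt0 : 0 < d2 by rewrite !divr_gt0.
have d2y : d2 * `|y| < e / 2.
  by rewrite /d2 mulrAC ltr_pdivrMr // ltr_pM2l ?divr_gt0 //; lra.
near=> L => L_ge0.
have Lz : `|z - L| < Num.min d1 d2.
  near: L; apply: (@cvgr_dist_lt _ _ _ (nbhs z) _ id z cvg_id).
  by rewrite lt_min d1_gt0 d2_gt0.
have Lz1 : `|L - z| < d1 by rewrite distrC; apply: lt_le_trans Lz _; rewrite ge_min lexx.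
have Lz2 : `|L - z| < d2 by rewrite distrC; apply: lt_le_trans Lz _; rewrite ge_min lexx orbT.
have WL := Wz_lsc L L_ge0 Lz1.
have Lzy : `|L * y - z * y| <= d2 * `|y| by rewrite -mulrBl normrM ler_wpM2r // ltW.
have := ler_norm (L * y - z * y); lra.
Unshelve. all: by end_near.
Qed.

Lemma labor_obj_max (y : R) : growth_assumption W -> exists L, is_argmax_labor W y L.
Proof.
move=> W_growth; have [M M_ge1 M_lt] := labor_obj_lt_eventually y W_growth.
have K0 : `[0, M]%classic 0 by rewrite /= in_itv /= lexx (le_trans ler01 M_ge1).
have K_usc z : `[0, M]%classic z -> forall e : R, 0 < e ->
    \forall L \near z, `[0, M]%classic L -> L * y - W L < z * y - W z + e.
  rewrite /= in_itv /= => /andP[z_ge0 _] e e_gt0.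
  apply: filterS (labor_obj_usc y z_ge0 e_gt0) => L L_usc.
  by rewrite /= in_itv /= => /andP[L_ge0 _]; exact: L_usc.
have [z Kz zmax] := usc_compact_max (f := fun L : R => L * y - W L)
  (@segment_compact R 0 M) (ex_intro _ _ K0) K_usc.
exists z; split => [|L L_ge0]; first by move: Kz; rewrite /= in_itv /= => /andP[].
have [LM|ML] := leP L M; first by apply: zmax; rewrite /= in_itv /= L_ge0 LM.
by apply: le_trans (ltW (M_lt L ML)) _; have := zmax 0 K0; rewrite mul0r sub0r.
Qed.

Lemma convex_chord_le a b c : 0 <= a -> a < b -> b < c ->
  (c - a) * W b <= (c - b) * W a + (b - a) * W c.
Proof.
move=> a_ge0 ab bc; have ca_gt0 : 0 < c - a by lra.
pose t := (c - b) / (c - a).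
have t01 : 0 <= t <= 1 by rewrite divr_ge0 ?ler_pdivrMr //=; lra.
have tb : t * a + (1 - t) * c = b by rewrite /t; field; lra.
have := ler_wpM2l (ltW ca_gt0) (W_convex a_ge0 (ltac:(lra) : 0 <= c) t01).
have -> : (c - a) * (t * W a + (1 - t) * W c) = (c - b) * W a + (b - a) * W c.
  by rewrite /t; field; lra.
by rewrite tb.
Qed.

Lemma differentiable_nonneg_rcvg (L : R) : differentiable_nonneg W -> 0 <= L ->
  cvg ((fun h : R => h^-1 * (W (L + h) - W L)) @ 0^'+).
Proof.
move=> [W_der W_rder0] L_ge0; have [->|L_neq0] := eqVneq L 0; first exact: W_rder0.
have /W_der : 0 < L by rewrite lt_neqAle eq_sym L_neq0.
rewrite /derivable => W_derL.
have -> : (fun h : R => h^-1 * (W (L + h) - W L)) =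
    (fun h : R => h^-1 *: ((W \o shift L) (h *: 1) - W L)).
  by apply: funext => h /=; rewrite -[h *: 1]/(h * 1) mulr1 [h + L]addrC.
exact: (cvgP _ (cvg_dnbhs_at_right W_derL)).
Qed.

(* Convexity makes the difference quotients at [L] bracket [W'(L)], so the
   first-order condition [W'(L) = y] is sufficient. *)
Lemma rderive_argmax (y L : R) : differentiable_nonneg W -> 0 <= L ->
  rderive W L = y -> is_argmax_labor W y L.
Proof.
move=> W_diff L_ge0 W'L; split => // L' L'_ge0.
pose D := fun h : R => h^-1 * (W (L + h) - W L).
have D_cvg : cvg (D @ 0^'+) := differentiable_nonneg_rcvg W_diff L_ge0.
have limD : lim (D @ 0^'+) = y by rewrite -W'L.
case: (ltgtP L' L) => [L'L|LL'|->]; last exact: lexx.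
- have LL'_gt0 : 0 < L - L' by lra.
  suff : (W L - W L') / (L - L') <= y by rewrite ler_pdivrMr //; lra.
  rewrite -limD; apply: limr_ge => //; near=> h.
  have h_gt0 : 0 < h by near: h; exact: nbhs_right_gt.
  have := convex_chord_le L'_ge0 L'L (ltac:(lra) : L < L + h).
  by rewrite /D ler_pdivrMr // -mulrA ler_pdivlMl //; lra.
- have L'L_gt0 : 0 < L' - L by lra.
  suff : y <= (W L' - W L) / (L' - L) by rewrite ler_pdivlMr //; lra.
  rewrite -limD; apply: limr_le => //; near=> h.
  have h_gt0 : 0 < h by near: h; exact: nbhs_right_gt.
  have hL'L : h < L' - L by near: h; exact: nbhs_right_lt.
  have := convex_chord_le L_ge0 (ltac:(lra) : L < L + h) (ltac:(lra) : L + h < L').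
  by rewrite /D ler_pdivlMr // -mulrA ler_pdivrMl //; lra.
Unshelve. all: by end_near.
Qed.

End LaborProblem.

Section FirmProblem.
Variables (R : realType) (N : nat) (i : 'I_N) (F : ('I_N -> R) -> R -> R -> R).
Variables (W : R -> R) (P : 'I_N -> R) (PE x c : R).
Hypotheses (P_ge0 : forall j, 0 <= P j) (PE_ge0 : 0 <= PE).
Hypotheses (F_ge0 : prod_nonneg F) (F_hom : prod_homogeneous1 F).
Hypothesis F_le : forall q E L, in_dom q E L -> F q E L <= c * L.

Lemma F_L0 q E : in_dom q E 0 -> F q E 0 = 0.
Proof.
move=> dom; apply/le_anti/andP; split; last exact: F_ge0.
by have := F_le dom; rewrite mulr0.
Qed.

Lemma profit_ray q E L : in_dom q E 1 -> 0 <= L ->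
  Profit F W i P (fun j => q j * L) (E * L) L PE x = L * (tilde_obj F i P PE q E - x) - W L.
Proof.
move=> [q_ge0 [E_ge0 _]] L_ge0; rewrite /Profit /tilde_obj.
have [->|L_neq0] := eqVneq L 0.
  rewrite F_L0; last by split; [move=> j|split]; rewrite ?mulr0.
  by rewrite big1 => [|j _]; rewrite ?mulr0 //; ring.
have L_gt0 : 0 < L by rewrite lt_neqAle eq_sym L_neq0.
have -> : F (fun j => q j * L) (E * L) L = L * F q E 1.
  rewrite -F_hom; last by [] ; last by split; [|split; rewrite ?ler01].
  by rewrite mulr1 [E * L]mulrC; congr F; apply: funext => j; rewrite mulrC.
have -> : \sum_j P j * (q j * L) = L * \sum_j P j * q j.
  by rewrite mulr_sumr; apply: eq_bigr => j _; ring.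
ring.
Qed.

Lemma profit_le_ray qt Et : is_argmax_tilde F i P PE qt Et -> forall q E L, in_dom q E L ->
  Profit F W i P q E L PE x <= L * (tilde_obj F i P PE qt Et - x) - W L.
Proof.
move=> [_ [_ qt_max]] q E L [q_ge0 [E_ge0 L_ge0]].
have [L0|L_neq0] := eqVneq L 0.
  rewrite /Profit L0 F_L0; last by split; [|split].
  have cost_ge0 : 0 <= \sum_j P j * q j + PE * E.
    by rewrite addr_ge0 ?mulr_ge0 ?sumr_ge0 // => j _; exact: mulr_ge0.
  lra.
have L_gt0 : 0 < L by rewrite lt_neqAle eq_sym L_neq0.
have q_ray : q = (fun j => q j / L * L) by apply: funext => j; rewrite divfK // gt_eqF.
have E_ray : E = E / L * L by rewrite divfK // gt_eqF.
rewrite {1}q_ray {1}E_ray profit_ray //; last first.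
  by split; [move=> j|split]; rewrite ?ler01 ?divr_ge0.
rewrite lerD2r; apply: ler_wpM2l => //; rewrite lerD2r.
by apply: qt_max => [j|]; rewrite divr_ge0.
Qed.

Lemma argmax_Pi_ray qt Et L : is_argmax_tilde F i P PE qt Et ->
  is_argmax_labor W (tilde_obj F i P PE qt Et - x) L ->
  is_argmax_Pi F W i P PE x (fun j => qt j * L) (Et * L) L.
Proof.
move=> qt_max [L_ge0 L_max]; have [qt_ge0 [Et_ge0 _]] := qt_max.
split; first by split; [move=> j|split]; rewrite ?mulr_ge0.
have qt_dom : in_dom qt Et 1 by split; [|split; rewrite ?ler01].
move=> q E L' dom; rewrite [X in _ <= X]profit_ray //.
apply: le_trans (profit_le_ray qt_max dom) _; apply: L_max.
by case: dom => _ [].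
Qed.

End FirmProblem.

Lemma Pitilde_argmax (R : realType) (N : nat) (i : 'I_N) (F : ('I_N -> R) -> R -> R -> R)
    (P : 'I_N -> R) (PE : R) qt Et :
  is_argmax_tilde F i P PE qt Et -> Pitilde F i P PE = tilde_obj F i P PE qt Et.
Proof.
move=> [qt_ge0 [Et_ge0 qt_max]]; apply: sup_maximum; first by exists qt, Et.
by move=> _ [q [E [q_ge0 [E_ge0 ->]]]]; exact: qt_max.
Qed.

Lemma Pibar_argmax (R : realType) (N : nat) (i : 'I_N) (F : ('I_N -> R) -> R -> R -> R)
    (W : R -> R) (P : 'I_N -> R) (PE x : R) q E L :
  is_argmax_Pi F W i P PE x q E L -> Pibar F W i P PE x = Profit F W i P q E L PE x.
Proof.
move=> [dom qEL_max]; apply: sup_maximum; first by exists q, E, L.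
by move=> _ [q' [E' [L' [dom' ->]]]]; exact: qEL_max.
Qed.

Lemma Wstar_argmax (R : realType) (W : R -> R) (y L : R) :
  is_argmax_labor W y L -> Wstar W y = L * y - W L.
Proof.
move=> [L_ge0 L_max]; apply: sup_maximum; first by exists L.
by move=> _ [L' [L'_ge0 ->]]; exact: L_max.
Qed.

(* [F] is linear along the ray through [(0, 0, 1)], so the strict inequality
   fails at the midpoint of [L = 1] and [L = 2]. *)
Lemma homogeneous_not_strictly_concave (R : realType) (N : nat)
    (F : ('I_N -> R) -> R -> R -> R) :
  prod_homogeneous1 F -> ~ prod_strictly_concave F.
Proof.
move=> F_hom F_sconc; set z0 := fun _ : 'I_N => 0 : R.
have dom L : 0 <= L -> in_dom z0 0 L by split; [move=> j|split].
have F_ray t : 0 < t -> F z0 0 t = t * F z0 0 1.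
  move=> t_gt0; have := F_hom z0 0 1 t (dom 1 ler01) t_gt0.
  rewrite [t * 0]mulr0 [t * 1]mulr1 => <-.
  by congr F; apply: funext => j; rewrite /z0 mulr0.
have vz0 : vcomb (1 / 2) z0 z0 = z0 by apply: funext => j; rewrite /vcomb /z0 !mulr0 addr0.
have := F_sconc _ _ _ _ _ _ (1 / 2) (dom 1 ler01) (dom 2 (ler0n _ 2))
  (ltac:(apply/andP; split; lra)) (or_intror (or_intror (ltac:(lra) : (1 : R) <> 2))).
rewrite vz0 !mulr0 addr0 (F_ray 2) ?ltr0n // (F_ray (1 / 2 * 1 + (1 - 1 / 2) * 2)); last by lra.
have -> : (1 / 2 * 1 + (1 - 1 / 2) * 2) * F z0 0 1
    = 1 / 2 * F z0 0 1 + (1 - 1 / 2) * (2 * F z0 0 1) by ring.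
by rewrite ltxx.
Qed.

Theorem proposition4p1 (R : realType) (N : nat) (i : 'I_N) (O : set R)
  (F : ('I_N -> R) -> R -> R -> R) (W : R -> R) :
  O `<=` [set y | 0 < y] ->
  production_assumption_b F -> labor_cost_assumption W -> growth_assumption W ->
  forall (P : 'I_N -> R) (PE x : R),
    (forall j, 0 < P j) -> 0 < PE -> x \in O ->
    [/\ (* (i) existence and (conditional) uniqueness *)
        (exists q E L, is_argmax_Pi F W i P PE x q E L) /\
        (prod_strictly_concave F -> strictly_convex_nonneg W ->
           forall q E L q' E' L', is_argmax_Pi F W i P PE x q E L ->
             is_argmax_Pi F W i P PE x q' E' L' -> [/\ q = q', E = E' & L = L']),
        (* (ii) *)
        Pibar F W i P PE x = Wstar W (Pitilde F i P PE - x)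
      & (* (iii) *)
        strictly_convex_nonneg W -> differentiable_nonneg W ->
        forall Lstar, 0 <= Lstar -> rderive W Lstar = Pitilde F i P PE - x ->
        forall qt Et, is_argmax_tilde F i P PE qt Et ->
          is_argmax_Pi F W i P PE x (fun j => qt j * Lstar) (Et * Lstar) Lstar].
Proof.
move=> _ [F_ge0 [_ [F_usc [_ [F_hom [c F_le]]]]]] [_ _ W_lsc W_convex] W_growth.
move=> P PE x P_gt0 PE_gt0 _; have P_ge0 j : 0 <= P j := ltW (P_gt0 j).
have [qt [Et qt_max]] := exists_argmax_tilde i P_gt0 PE_gt0 F_ge0 F_usc F_le.
have [L L_max] := labor_obj_max W_lsc (tilde_obj F i P PE qt Et - x) W_growth.
have ray_max := argmax_Pi_ray P_ge0 (ltW PE_gt0) F_ge0 F_hom F_le qt_max L_max.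
split.
- split; first by do 3 eexists; exact: ray_max.
  by move=> /(homogeneous_not_strictly_concave F_hom).
- have [qt_ge0 [Et_ge0 _]] := qt_max.
  have qt_dom : in_dom qt Et 1 by split; [|split; rewrite ?ler01].
  rewrite (Pibar_argmax ray_max) (Pitilde_argmax qt_max) (Wstar_argmax L_max).
  exact: (profit_ray i W P PE x F_ge0 F_hom F_le qt_dom (proj1 L_max)).
- move=> _ W_diff Lstar Lstar_ge0 W'Lstar q E qE_max.
  apply: (argmax_Pi_ray P_ge0 (ltW PE_gt0) F_ge0 F_hom F_le qE_max).
  by apply: rderive_argmax; rewrite // -(Pitilde_argmax qE_max).
Qed.
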